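(* Let $G:\mathbb{R}_+\to\mathbb{R}_+$ with $G(0)>0$ be a convolution kernel that preserves nonnegativity in the following sense: for any $K\in\mathbb{N}^*$, $x_1,\dots,x_K\in\mathbb{R}$ and $0\le t_1<\dots<t_K$ such that $\sum_{k'=1}^kx_{k'}G(t_k-t_{k'})\ge0$ for all $k\in\{1,\dots,K\}$, one has $\sum_{k:t_k\le t}x_kG(t-t_k)\ge0$ for all $t\ge0$. Let $\rho$ be a Borel measure on $\mathbb{R}_+$ finite on compact sets. Then the double kernels $\Gamma^r(t,s)=G(\rho((s,t]))$ and $\Gamma^\ell(t,s)=G(\rho([s,t)))$, $0\le s\le t$, preserve nonnegativity.
   Context: A double kernel $\Gamma:\{(t,s):0\le s\le t\}\to\mathbb{R}_+$ preserves nonnegativity if for every $T>0$, any $K\in\mathbb{N}^*$, $x_1,\dots,x_K\in\mathbb{R}$ and $0\le t_1<\dots<t_K<T$ with $\sum_{k'=1}^kx_{k'}\Gamma(t_k,t_{k'})\ge0$ for all $k$, one has $\sum_{k:t_k\le t}x_k\Gamma(t,t_k)\ge0$ for all $t\in[0,T]$. *)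

From HB Require Import structures.
From mathcomp Require Import all_boot all_order all_algebra.
From mathcomp Require Import all_classical all_reals all_analysis.
Set Implicit Arguments. Unset Strict Implicit. Unset Printing Implicit Defensive.
Import Order.TTheory GRing.Theory Num.Theory.
Import numFieldNormedType.Exports.
Local Open Scope ring_scope.
Local Open Scope classical_set_scope.

Definition admissible_times (R : realType) (K : nat) (t : 'I_K -> R) : Prop :=
  (forall i, 0 <= t i) /\ (forall i j : 'I_K, (i < j)%N -> t i < t j).

Definition conv_preserves_nonneg (R : realType) (G : R -> R) : Prop :=
  forall (K : nat) (x t : 'I_K -> R),
    (0 < K)%N -> admissible_times t ->
    (forall k : 'I_K, 0 <= \sum_(k' < K | (k' <= k)%N) x k' * G (t k - t k')) ->
    forall s : R, 0 <= s -> 0 <= \sum_(k < K | t k <= s) x k * G (s - t k).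

Definition double_preserves_nonneg (R : realType) (Gam : R -> R -> R) : Prop :=
  forall (T : R), 0 < T ->
  forall (K : nat) (x t : 'I_K -> R),
    (0 < K)%N -> admissible_times t -> (forall k, t k < T) ->
    (forall k : 'I_K, 0 <= \sum_(k' < K | (k' <= k)%N) x k' * Gam (t k) (t k')) ->
    forall s : R, 0 <= s <= T -> 0 <= \sum_(k < K | t k <= s) x k * Gam s (t k).

Definition Gamma_r (R : realType) (G : R -> R)
  (rho : {measure set R -> \bar R}) : R -> R -> R :=
  fun t s => G (fine (rho [set u | s < u <= t])).
Definition Gamma_l (R : realType) (G : R -> R)
  (rho : {measure set R -> \bar R}) : R -> R -> R :=
  fun t s => G (fine (rho [set u | s <= u < t])).

From HB Require Import structures.
From mathcomp Require Import all_boot all_order all_algebra.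
From mathcomp Require Import all_classical all_reals all_analysis.
Import Order.TTheory GRing.Theory Num.Theory.
Import numFieldNormedType.Exports.
Local Open Scope ring_scope.
Local Open Scope classical_set_scope.

(* With F(u) = rho([0,u]) (resp. rho([0,u))), both double kernels are
   G(F t - F s): a time change by the nondecreasing function F turns them into
   the convolution kernel G evaluated at the times F(t_k). These times are
   nondecreasing but may coincide; merging two equal times into one, with the
   sum of their weights, changes none of the sums involved, so after finitely
   many merges the times are strictly increasing and the hypothesis on G
   applies. *)

Section MergeTimes.
Context {R : pzSemiRingType} {T : Type}.
Implicit Types (x : nat -> R) (t : nat -> T) (h : T -> R).

Definition merge_weights x i j : R :=
  if (j < i)%N then x j else if j == i then x i + x i.+1 else x j.+1.

Definition merge_times t i j : T := if (j <= i)%N then t j else t j.+1.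

Lemma sum_merge_le x t h i n : (n <= i)%N ->
  \sum_(0 <= j < n) merge_weights x i j * h (merge_times t i j) =
  \sum_(0 <= k < n) x k * h (t k).
Proof.
move=> ni; apply: eq_big_nat => j /andP[_ jn]; have ji := leq_trans jn ni.
by rewrite /merge_weights /merge_times ji (ltnW ji).
Qed.

Lemma sum_merge x t h i n : t i = t i.+1 -> (i < n)%N ->
  \sum_(0 <= j < n) merge_weights x i j * h (merge_times t i j) =
  \sum_(0 <= k < n.+1) x k * h (t k).
Proof.
move=> tii; elim: n => // n IHn; rewrite ltnS leq_eqVlt => /orP[/eqP <-|lt_in].
  rewrite big_nat_recr // sum_merge_le // !big_nat_recr //= -addrA.
  by rewrite /merge_weights /merge_times ltnn eqxx leqnn -tii mulrDl.
rewrite big_nat_recr // IHn // [RHS]big_nat_recr //=.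
rewrite /merge_weights /merge_times ltnNge (ltnW lt_in) gtn_eqF //.
by rewrite leqNgt lt_in.
Qed.

End MergeTimes.

Lemma merge_times_homo {R : numDomainType} (t : nat -> R) i n :
  (forall j k, (j <= k)%N -> (k < n.+1)%N -> t j <= t k) ->
  forall j k, (j <= k)%N -> (k < n)%N -> merge_times t i j <= merge_times t i k.
Proof.
move=> t_homo j k jk kn; rewrite /merge_times.
case: (leqP j i) => ji; case: (leqP k i) => ki.
- by apply: t_homo => //; exact: ltnW.
- by apply: t_homo; [exact: leqW |].
- by move: (leq_trans ji jk); rewrite ltnNge ki.
- exact: t_homo.
Qed.

Lemma increasing_of_adjacent_neq {R : numDomainType} (t : nat -> R) n :
  (forall j k, (j <= k)%N -> (k < n)%N -> t j <= t k) ->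
  (forall i, (i.+1 < n)%N -> t i != t i.+1) ->
  forall j k, (j < k)%N -> (k < n)%N -> t j < t k.
Proof.
move=> t_homo t_neq j k jk kn.
have t_lt : {in [pred k | (k < n)%N] &, {homo t : j k / (j < k)%N >-> j < k}}.
  apply: homo_ltn_in => [a b c|a b _ bn c /andP[_ cb]|i _ lt_in].
  - exact: lt_trans.
  - exact: ltn_trans cb bn.
  - by rewrite /= lt_neqAle t_neq // (t_homo _ _ (leqnSn i)).
by apply: t_lt; rewrite ?inE // (ltn_trans jk kn).
Qed.

Lemma downward_closed_prefix (P : pred nat) n :
  (forall i j, (i <= j)%N -> (j < n)%N -> P j -> P i) ->
  exists2 m, (m <= n)%N & forall k, (k < n)%N -> P k = (k < m)%N.
Proof.
move=> P_down; pose s := iota 0 n; exists (find (predC P) s).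
  by rewrite -[X in (_ <= X)%N](size_iota 0 n) find_size.
move=> k kn; apply/idP/idP => [Pk|]; last first.
  by move=> /(before_find 0); rewrite nth_iota //= => /negbFE.
rewrite ltnNge; apply/negP => mk; have lt_mn := leq_ltn_trans mk kn.
have := nth_find 0 (_ : has (predC P) s); rewrite nth_iota ?size_iota //=.
by rewrite add0n (P_down _ _ mk kn Pk) has_find size_iota lt_mn => /(_ isT).
Qed.

Lemma sum_ord_prefix {R : nmodType} (f : nat -> R) n k : (k < n)%N ->
  \sum_(j < n | (j <= k)%N) f j = \sum_(0 <= j < k.+1) f j.
Proof. by move=> kn; rewrite big_mkord (big_ord_widen _ _ kn). Qed.

Lemma factor_through_val {T : Type} {n} (f : 'I_n.+1 -> T) :
  exists g : nat -> T, f = g \o val.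
Proof.
by exists (fun k => f (inord k)); apply/funext => k /=; rewrite inord_val.
Qed.

Section ConvolutionKernel.
Variables (R : realType) (G : R -> R).
Hypothesis G_conv : conv_preserves_nonneg G.

Definition nonneg_at_times n (x t : nat -> R) :=
  forall k, (k < n)%N -> 0 <= \sum_(0 <= j < k.+1) x j * G (t k - t j).

Lemma nonneg_at_times_merge n x t i : t i = t i.+1 -> (i < n)%N ->
  nonneg_at_times n.+1 x t ->
  nonneg_at_times n (merge_weights x i) (merge_times t i).
Proof.
move=> tii lt_in hx k kn; have [ki|ik] := ltnP k i.
  rewrite (sum_merge_le x t (fun u => G (merge_times t i k - u))) //.
  by rewrite /merge_times (ltnW ki); apply: hx; apply: ltnW.
rewrite (sum_merge x t (fun u => G (merge_times t i k - u)) _ k.+1 tii ik).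
have -> : merge_times t i k = t k.+1.
  rewrite /merge_times; case: leqP => // ki.
  by have /eqP -> : k == i by rewrite eqn_leq ki ik.
exact: hx.
Qed.

Lemma conv_nonneg_sum_increasing n x t s :
  (forall k, (k < n)%N -> 0 <= t k) ->
  (forall j k, (j < k)%N -> (k < n)%N -> t j < t k) ->
  nonneg_at_times n x t -> (forall k, (k < n)%N -> t k <= s) ->
  0 <= \sum_(0 <= k < n) x k * G (s - t k).
Proof.
case: n => [|n] t_ge0 t_lt hx ts; first by rewrite big_geq.
suff -> : \sum_(0 <= k < n.+1) x k * G (s - t k) =
          \sum_(k < n.+1 | t k <= s) x k * G (s - t k).
  apply: (G_conv n.+1 (fun k => x k) (fun k => t k) (ltn0Sn n)).
  - by split=> [k | j k jk]; [exact: t_ge0 | exact: t_lt].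
  - move=> k; rewrite (sum_ord_prefix (fun j => x j * G (t k - t j))) //.
    exact: hx.
  - exact: le_trans (t_ge0 _ (ltn0Sn n)) (ts _ (ltn0Sn n)).
by rewrite big_mkord; apply: eq_bigl => k; rewrite ts.
Qed.

Lemma conv_nonneg_sum_nondecreasing n x t s :
  (forall k, (k < n)%N -> 0 <= t k) ->
  (forall j k, (j <= k)%N -> (k < n)%N -> t j <= t k) ->
  nonneg_at_times n x t -> (forall k, (k < n)%N -> t k <= s) ->
  0 <= \sum_(0 <= k < n) x k * G (s - t k).
Proof.
elim: n x t => [|n IHn] x t t_ge0 t_homo hx ts; first by rewrite big_geq.
have [[i [lt_in tii]]|t_inj] := pselect (exists i, (i < n)%N /\ t i = t i.+1).
  rewrite -(sum_merge x t (fun u => G (s - u)) _ _ tii lt_in).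
  apply: IHn; [| exact: merge_times_homo | exact: nonneg_at_times_merge |].
    move=> k kn; rewrite /merge_times.
    by case: ifP => _; apply: t_ge0 => //; exact: ltnW.
  move=> k kn; rewrite /merge_times.
  by case: ifP => _; apply: ts => //; exact: ltnW.
apply: conv_nonneg_sum_increasing => //.
apply: increasing_of_adjacent_neq => // i lt_in.
by apply/eqP => tii; apply: t_inj; exists i.
Qed.

Lemma double_preserves_nonneg_time_change (F : R -> R) (Gam : R -> R -> R) :
  (forall u, 0 <= u -> 0 <= F u) ->
  (forall u v, 0 <= u -> u <= v -> F u <= F v) ->
  (forall a b, 0 <= a -> a <= b -> Gam b a = G (F b - F a)) ->
  double_preserves_nonneg Gam.
Proof.
move=> F_ge0 F_homo GamE T _ [//|n] xI tI.
have [x ->] := factor_through_val xI; have [t ->] := factor_through_val tI.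
move=> _ [t_ge0 t_lt] _ hx s _.
have {}t_ge0 k : (k < n.+1)%N -> 0 <= t k.
  by move=> kn; exact: (t_ge0 (Ordinal kn)).
have t_homo j k : (j <= k)%N -> (k < n.+1)%N -> t j <= t k.
  rewrite leq_eqVlt => /orP[/eqP -> // | jk] kn.
  exact: ltW (t_lt (Ordinal (ltn_trans jk kn)) (Ordinal kn) jk).
(* A time t_k > s may still have F t_k = F s, so the sum is cut at the prefix
   of the times <= s instead of being filtered through F. *)
have [m mn ts] := @downward_closed_prefix (fun k => t k <= s) n.+1
  (fun i j ij jn tjs => le_trans (t_homo i j ij jn) tjs).
have mn1 k : (k < m)%N -> (k < n.+1)%N by move=> km; exact: leq_trans km mn.
have tm k : (k < m)%N -> t k <= s by move=> km; rewrite ts ?mn1.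
suff -> : \sum_(k < n.+1 | t k <= s) x k * Gam s (t k) =
          \sum_(0 <= k < m) x k * G (F s - F (t k)).
  apply: conv_nonneg_sum_nondecreasing => [k km | j k jk km | k km | k km].
  - exact/F_ge0/t_ge0/mn1.
  - apply: (F_homo _ _ _ (t_homo _ _ jk (mn1 _ km))).
    by apply/t_ge0/mn1; exact: leq_ltn_trans jk km.
  - have := hx (Ordinal (mn1 _ km)).
    rewrite /= (sum_ord_prefix (fun j => x j * Gam (t k) (t j))) ?mn1 //.
    congr (0 <= _); apply: eq_big_nat => j /andP[_ jk]; rewrite GamE //.
      by apply: t_ge0; exact: leq_trans jk (mn1 _ km).
    by apply: t_homo => //; exact: mn1.
  - exact: F_homo _ _ (t_ge0 _ (mn1 _ km)) (tm _ km).
rewrite -(big_mkord (fun k => t k <= s) (fun k => x k * Gam s (t k))).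
rewrite (big_nat_widen _ _ _ _ _ mn).
apply: congr_big_nat => // k /and3P[tks _ kn].
by rewrite GamE ?t_ge0.
Qed.

End ConvolutionKernel.

Lemma double_preserves_nonneg_measure {R : realType} {G : R -> R}
    {d} {T : measurableType d} (rho : {measure set T -> \bar R})
    (A : R -> set T) {Gam : R -> R -> R} :
  conv_preserves_nonneg G ->
  (forall u, measurable (A u)) ->
  (forall u, 0 <= u -> (rho (A u) < +oo)%E) ->
  (forall u v, u <= v -> A u `<=` A v) ->
  (forall a b, 0 <= a -> a <= b -> Gam b a = G (fine (rho (A b `\` A a)))) ->
  double_preserves_nonneg Gam.
Proof.
move=> G_conv mA A_fin A_homo GamE.
have A_fin_num u : 0 <= u -> rho (A u) \is a fin_num.
  by move=> u0; rewrite ge0_fin_numE ?measure_ge0 ?A_fin.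
pose F u := fine (rho (A u)).
apply: (@double_preserves_nonneg_time_change _ _ G_conv F).
rewrite {}/F.
- by move=> u _; rewrite fine_ge0 ?measure_ge0.
- move=> u v u0 uv; apply: fine_le; rewrite ?A_fin_num ?(le_trans u0 uv) //.
  by apply: le_measure; rewrite ?inE //; exact: A_homo.
- move=> a b a0 ab; rewrite GamE // measureD ?A_fin // ?(le_trans a0 ab) //.
  rewrite (setIidr (A_homo _ _ ab)); congr G.
  by apply: fineB; apply: A_fin_num; rewrite // (le_trans a0 ab).
Qed.

Lemma setD_itvcc (R : realDomainType) (c a b : R) : c <= a ->
  [set v | c <= v <= b] `\` [set v | c <= v <= a] = [set v | a < v <= b].
Proof.
move=> ca; apply/seteqP; split => v /=.
  by move=> [/andP[-> ->] /negP]; rewrite andbT /= -ltNge.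
move=> /andP[av ->]; rewrite (le_trans ca (ltW av)); split=> // /andP[_].
by rewrite leNgt av.
Qed.

Lemma setD_itvco (R : realDomainType) (c a b : R) : c <= a ->
  [set v | c <= v < b] `\` [set v | c <= v < a] = [set v | a <= v < b].
Proof.
move=> ca; apply/seteqP; split => v /=.
  by move=> [/andP[-> ->] /negP]; rewrite andbT /= -leNgt.
move=> /andP[av ->]; rewrite (le_trans ca av); split=> // /andP[_].
by rewrite ltNge av.
Qed.

Theorem mainTheorem8 (R : realType) (G : R -> R)
  (rho : {measure set R -> \bar R}) :
  (forall u : R, 0 <= u -> 0 <= G u) ->
  0 < G 0 ->
  conv_preserves_nonneg G ->
  (forall A : set R, compact A -> A `<=` [set u | 0 <= u] -> (rho A < +oo)%E) ->
  double_preserves_nonneg (Gamma_r G rho) /\ double_preserves_nonneg (Gamma_l G rho).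
Proof.
move=> _ _ G_conv rho_fin.
have mcc u : measurable [set v : R | 0 <= v <= u].
  by rewrite -set_itvcc; exact: measurable_itv.
have mco u : measurable [set v : R | 0 <= v < u].
  by rewrite -set_itvco; exact: measurable_itv.
have fin_cc (u : R) : (rho [set v | (0 <= v <= u)%R] < +oo)%E.
  apply: rho_fin => [|v /andP[] //]; rewrite -set_itvcc; exact: segment_compact.
split.
  apply: (double_preserves_nonneg_measure rho
           (fun u => [set v | 0 <= v <= u]) G_conv).
  - exact: mcc.
  - by move=> u _; exact: fin_cc.
  - by move=> u v uv w /= /andP[-> wu]; exact: le_trans wu uv.
  - by move=> a b a0 _; rewrite setD_itvcc.
apply: (double_preserves_nonneg_measure rho
         (fun u => [set v | 0 <= v < u]) G_conv).
- exact: mco.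
- move=> u _; apply: le_lt_trans (fin_cc u); apply: le_measure; rewrite ?inE //.
  by move=> v /= /andP[-> /ltW].
- by move=> u v uv w /= /andP[-> wu]; exact: lt_le_trans wu uv.
- by move=> a b a0 _; rewrite setD_itvco.
Qed.
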